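(* Under the setting described in the context, let $m^*=(m_1^*,\dots,m_N^* )\in\prod_{i\in\mathcal N}\mathcal M_i$ be a Nash equilibrium of the game induced by the game form, and let $\hat a^*_i:=\hat a_i(m^* )$ and $\hat t^*_i:=\hat t_i(m^* )$ for $i\in\mathcal N$. Then: (a) (individual rationality) for every $i\in\mathcal N$, $u_i^A\big((\hat a^*_j)_{j\in\mathcal R_i},\hat t^*_i\big)\ \ge\ u_i^A(\mathbf 0,0)$; (b) $\big((\hat a^*_i)_{i\in\mathcal N},(\hat t^*_i)_{i\in\mathcal N}\big)$ is an optimal solution of the centralized problem $(P_C)$.
   Context: Let $N\ge 1$ and $\mathcal N=\{1,\dots,N\}$. For each $i\in\mathcal N$ a set $\mathcal R_i\subseteq\mathcal N$ with $i\in\mathcal R_i$ is given (the users affecting $i$); for $j\in\mathcal N$ put $\mathcal C_j=\{k\in\mathcal N: j\in\mathcal R_k\}$ (the users affected by $j$), and assume $|\mathcal C_j|\ge 3$ for all $j$. Each $\mathcal A_i\subset\mathbb R$ is a nonempty convex compact set with $0\in\mathcal A_i$. For each $i$, $u_i:\mathbb R^{\mathcal R_i}\to\mathbb R\cup\{-\infty\}$ is concave, is real-valued at every $a_{\mathcal R_i}=(a_k)_{k\in\mathcal R_i}$ with $a_i\in\mathcal A_i$, and equals $-\infty$ whenever $a_i\notin\mathcal A_i$. The aggregate utility of $i$ is $u_i^A(a_{\mathcal R_i},t_i)=-t_i+u_i(a_{\mathcal R_i})$ if $a_i\in\mathcal A_i$ and $-\infty$ otherwise ($t_i\in\mathbb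 R$ is a tax). Centralized problem $(P_C)$: maximize $\sum_{i\in\mathcal N}u_i^A(a_{\mathcal R_i},t_i)$ over $(a,t)\in\mathbb R^N\times\mathbb R^N$ subject to $\sum_i t_i=0$; equivalently maximize $\sum_i u_i(a_{\mathcal R_i})$ over the feasible set $\mathcal D=\{(a,t): a_i\in\mathcal A_i\ \forall i,\ \sum_i t_i=0\}$. Game form: user $i$'s message is $m_i=({}^ia_{\mathcal R_i},{}^i\pi_{\mathcal R_i})$ with ${}^ia_{\mathcal R_i}=({}^ia_k)_{k\in\mathcal R_i}\in\mathbb R^{\mathcal R_i}$ and ${}^i\pi_{\mathcal R_i}=({}^i\pi_k)_{k\in\mathcal R_i}\in\mathbb R_+^{\mathcal R_i}$; $\mathcal M_i=\mathbb R^{\mathcal R_i}\times\mathbb R_+^{\mathcal R_i}$. The action outcome is $\hat a_i(m)=\frac1{|\mathcal C_i|}\sum_{k\in\mathcal C_i}{}^ka_i$. For each $j$ fix a bijection $\mathcal I_{\cdot j}:\mathcal C_j\to\{1,\dots,|\mathcal C_j|\}$, write $\mathcal C_{j(k)}$ for the user of $\mathcal C_j$ with index $k$, indices taken cyclically modulo $|\mathcal C_j|$ (so $\mathcal C_{j(|\mathcal C_j|+1)}=\mathcal C_{j(1)}$ etc.). For $i\in\mathcal N$, $j\in\mathcal R_i$ (equivalently $i\in\mathcal C_j$) write $i^+=\mathcal C_{j(\mathcal I_{ij}+1)}$, $i^{++}=\mathcal C_{j(\mathcal I_{ij}+2)}$ (depending on $j$), and define $l_{ij}(m)={}^{i^+}\pi_j-{}^{i^{++}}\pi_j$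 and the tax $\hat t_i(m)=\sum_{j\in\mathcal R_i}\Big[l_{ij}(m)\,\hat a_j(m)+{}^i\pi_j\big({}^ia_j-{}^{i^+}a_j\big)^2-{}^{i^+}\pi_j\big({}^{i^+}a_j-{}^{i^{++}}a_j\big)^2\Big]$. A Nash equilibrium is $m^*\in\prod_i\mathcal M_i$ such that for all $i$ and all $m_i\in\mathcal M_i$, $u_i^A\big((\hat a_j(m^* ))_{j\in\mathcal R_i},\hat t_i(m^* )\big)\ge u_i^A\big((\hat a_j(m_i,m^*_{-i}))_{j\in\mathcal R_i},\hat t_i(m_i,m^*_{-i})\big)$, where $(m_i,m^*_{-i})$ replaces the $i$-th message of $m^*$ by $m_i$. *)

From Stdlib Require Import Reals List Arith ClassicalEpsilon.
From Stdlib Require Export Rtopology.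
Import ListNotations.
Open Scope R_scope.

(* Extended reals R ∪ {-∞}: Some x = x, None = -∞ *)
Definition ER := option R.
Definition ERle (x y : ER) : Prop :=
  match x, y with
  | None, _ => True
  | Some _, None => False
  | Some a, Some b => a <= b
  end.
Definition ERplus (x y : ER) : ER :=
  match x, y with Some a, Some b => Some (a + b) | _, _ => None end.

Definition sumN (N : nat) (f : nat -> R) : R := fold_right Rplus 0 (map f (seq 0 N)).
Definition sumN_if (N : nat) (P : nat -> bool) (f : nat -> R) : R :=
  fold_right Rplus 0 (map f (filter P (seq 0 N))).
Definition ERsumN (N : nat) (f : nat -> ER) : ER := fold_right ERplus (Some 0) (map f (seq 0 N)).

(* Rb i k = true  <->  k ∈ R_i.   C_j = { k : j ∈ R_k } *)
Definition Cmem (Rb : nat -> nat -> bool) (j : nat) : nat -> bool := fun k => Rb k j.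
Definition Ccard (N : nat) (Rb : nat -> nat -> bool) (j : nat) : nat :=
  length (filter (Cmem Rb j) (seq 0 N)).

Definition convex_set (A : R -> Prop) : Prop :=
  forall x y l, A x -> A y -> 0 <= l <= 1 -> A (l * x + (1 - l) * y).

(* aggregate utility u_i^A(a_{R_i}, t_i) with values in R ∪ {-∞};
   a is a full action profile, u i depends only on coordinates in R_i *)
Definition uA (A : nat -> R -> Prop) (u : nat -> (nat -> R) -> R)
  (i : nat) (a : nat -> R) (t : R) : ER :=
  if excluded_middle_informative (A i (a i)) then Some (- t + u i a) else None.

(* action outcome  â_i(m) = 1/|C_i| Σ_{k∈C_i} ^k a_i ;  ma k j = ^k a_j *)
Definition ahat (N : nat) (Rb : nat -> nat -> bool) (ma : nat -> nat -> R) (i : nat) : R :=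
  / INR (Ccard N Rb i) * sumN_if N (Cmem Rb i) (fun k => ma k i).

(* cyclic ordering of C_j: ordr j enumerates C_j, position p ↦ index p+1 *)
Fixpoint index_of (x : nat) (l : list nat) : nat :=
  match l with
  | [] => 0
  | y :: l' => if Nat.eqb x y then 0 else S (index_of x l')
  end.
(* the user s steps after i in the cyclic order of l (s = 1 : i^+, s = 2 : i^{++}) *)
Definition cyc (l : list nat) (i s : nat) : nat :=
  nth ((index_of i l + s) mod length l) l 0%nat.

(* tax  t̂_i(m);  mp k j = ^k π_j *)
Definition that (N : nat) (Rb : nat -> nat -> bool) (ordr : nat -> list nat)
  (ma mp : nat -> nat -> R) (i : nat) : R :=
  sumN_if N (Rb i) (fun j =>
    let ip := cyc (ordr j) i 1 in
    let ipp := cyc (ordr j) i 2 in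
    (mp ip j - mp ipp j) * ahat N Rb ma j
    + mp i j * (ma i j - ma ip j) ^ 2
    - mp ip j * (ma ip j - ma ipp j) ^ 2).

Definition dev (m : nat -> nat -> R) (i : nat) (row : nat -> R) : nat -> nat -> R :=
  fun k => if Nat.eqb k i then row else m k.

(* m_i ∈ M_i : prices nonnegative on R_i *)
Definition msg_ok (Rb : nat -> nat -> bool) (i : nat) (pi_row : nat -> R) : Prop :=
  forall k, Rb i k = true -> 0 <= pi_row k.

Definition is_NE (N : nat) (Rb : nat -> nat -> bool) (ordr : nat -> list nat)
  (A : nat -> R -> Prop) (u : nat -> (nat -> R) -> R) (ma mp : nat -> nat -> R) : Prop :=
  (forall i, (i < N)%nat -> msg_ok Rb i (mp i)) /\
  forall i, (i < N)%nat -> forall (ra rp : nat -> R), msg_ok Rb i rp ->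
    ERle (uA A u i (ahat N Rb (dev ma i ra)) (that N Rb ordr (dev ma i ra) (dev mp i rp) i))
         (uA A u i (ahat N Rb ma) (that N Rb ordr ma mp i)).

Definition PC_obj (N : nat) (A : nat -> R -> Prop) (u : nat -> (nat -> R) -> R)
  (a t : nat -> R) : ER := ERsumN N (fun i => uA A u i a (t i)).

Definition PC_optimal (N : nat) (A : nat -> R -> Prop) (u : nat -> (nat -> R) -> R)
  (a t : nat -> R) : Prop :=
  ((forall i, (i < N)%nat -> A i (a i)) /\ sumN N t = 0) /\
  forall a' t' : nat -> R, sumN N t' = 0 -> ERle (PC_obj N A u a' t') (PC_obj N A u a t).

From Stdlib Require Import Reals List Arith ClassicalEpsilon Rtopology.
From Stdlib Require Import Lia Lra Permutation Classical.
Import ListNotations.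
Open Scope R_scope.

(* By changing only its own proposals ^ia_j,
   user i can move every outcome â_j (j ∈ R_i) to an arbitrary target b_j; announcing
   zero prices at the same time, its tax becomes Σ_j l_ij b_j minus the quadratic
   terms of its successors, which it does not control.  The equilibrium inequality
   against this deviation yields
   - feasibility of the outcome and individual rationality (take b = 0), and
   - price taking: â maximizes u_i(b) - Σ_j l_ij b_j over feasible b.
   Summing the price-taking inequalities over i, both the prices l_ij and the taxes
   cancel, because they telescope around each cyclic order on C_j; hence no feasible
   budget-balanced allocation has a larger total utility, which is optimality in (P_C). *)

Definition lsum (l : list nat) (f : nat -> R) : R := fold_right Rplus 0 (map f l).

Lemma sumN_lsum N f : sumN N f = lsum (seq 0 N) f.
Proof. reflexivity. Qed.

Lemma sumN_if_lsum N P f : sumN_if N P f = lsum (filter P (seq 0 N)) f.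
Proof. reflexivity. Qed.

Lemma lsum_cons a l f : lsum (a :: l) f = f a + lsum l f.
Proof. reflexivity. Qed.

Lemma lsum_app l1 l2 f : lsum (l1 ++ l2) f = lsum l1 f + lsum l2 f.
Proof. induction l1 as [|a l1 IH]; cbn [app]; [unfold lsum; simpl; lra|].
  rewrite !lsum_cons, IH; lra. Qed.

Lemma lsum_ext l f g : (forall x, In x l -> f x = g x) -> lsum l f = lsum l g.
Proof. induction l as [|a l IH]; intros H; [reflexivity|].
  rewrite !lsum_cons, H, IH; [reflexivity| |simpl; auto]. intros; apply H; simpl; auto. Qed.

Lemma lsum_zero l : lsum l (fun _ => 0) = 0.
Proof. induction l as [|a l IH]; [reflexivity|]. rewrite lsum_cons, IH; lra. Qed.

Lemma lsum_plus l f g : lsum l (fun x => f x + g x) = lsum l f + lsum l g.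
Proof. induction l as [|a l IH]; [unfold lsum; simpl; lra|]. rewrite !lsum_cons, IH; lra. Qed.

Lemma lsum_opp l f : lsum l (fun x => - f x) = - lsum l f.
Proof. induction l as [|a l IH]; [unfold lsum; simpl; lra|]. rewrite !lsum_cons, IH; lra. Qed.

Lemma lsum_minus l f g : lsum l (fun x => f x - g x) = lsum l f - lsum l g.
Proof. unfold Rminus. rewrite lsum_plus, lsum_opp. reflexivity. Qed.

Lemma lsum_le l f g : (forall x, In x l -> f x <= g x) -> lsum l f <= lsum l g.
Proof. induction l as [|a l IH]; intros H; [unfold lsum; simpl; lra|]. rewrite !lsum_cons.
  assert (f a <= g a) by (apply H; simpl; auto).
  assert (lsum l f <= lsum l g) by (apply IH; intros; apply H; simpl; auto). lra. Qed.

Lemma lsum_nonneg l f : (forall x, In x l -> 0 <= f x) -> 0 <= lsum l f.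
Proof. intros H. rewrite <- (lsum_zero l). apply lsum_le, H. Qed.

Lemma lsum_perm l l' f : Permutation l l' -> lsum l f = lsum l' f.
Proof. induction 1; rewrite ?lsum_cons; try lra. Qed.

Lemma lsum_filter (P : nat -> bool) l f :
  lsum (filter P l) f = lsum l (fun x => if P x then f x else 0).
Proof. induction l as [|a l IH]; [reflexivity|]. cbn [filter].
  rewrite lsum_cons, <- IH. destruct (P a); rewrite ?lsum_cons; lra. Qed.

Lemma lsum_swap l1 l2 (F : nat -> nat -> R) :
  lsum l1 (fun i => lsum l2 (F i)) = lsum l2 (fun j => lsum l1 (fun i => F i j)).
Proof. induction l1 as [|a l1 IH].
  - symmetry. apply lsum_zero.
  - rewrite lsum_cons, IH, <- lsum_plus. reflexivity. Qed.

Lemma lsum_update l i x f : NoDup l -> In i l ->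
  lsum l (fun k => if Nat.eqb k i then x else f k) = lsum l f - f i + x.
Proof. induction l as [|a l IH]; intros Hn Hi; [destruct Hi|]. inversion Hn; subst.
  rewrite !lsum_cons. destruct Hi as [->|Hi].
  - rewrite Nat.eqb_refl, (lsum_ext l _ f); [lra|]. intros y Hy.
    destruct (Nat.eqb_spec y i); [subst; contradiction|reflexivity].
  - rewrite IH by auto. destruct (Nat.eqb_spec a i); [subst; contradiction|lra]. Qed.

Lemma lsum_positions l F : lsum l F = lsum (seq 0 (length l)) (fun p => F (nth p l 0%nat)).
Proof. induction l as [|a l IH]; [reflexivity|]. cbn [length seq nth]. rewrite !lsum_cons, IH.
  f_equal. rewrite <- seq_shift. unfold lsum. rewrite map_map. reflexivity. Qed.

Lemma lsum_rotate n h : (1 <= n)%nat ->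
  lsum (seq 0 n) (fun p => h ((p + 1) mod n)%nat) = lsum (seq 0 n) h.
Proof. intros Hn. destruct n as [|m]; [lia|].
  assert (Hshift : lsum (seq 0 m) (fun x => h (S x)) + h 0%nat = lsum (seq 0 m) h + h m).
  { clear Hn. induction m as [|m IH]; [unfold lsum; simpl; lra|].
    rewrite !seq_S, !lsum_app, !lsum_cons. unfold lsum at 2 4. simpl. lra. }
  rewrite !seq_S, !lsum_app, !lsum_cons. unfold lsum at 2 4. simpl (0 + m)%nat.
  replace ((m + 1) mod S m)%nat with 0%nat
    by (replace (m + 1)%nat with (0 + 1 * S m)%nat by lia;
        rewrite Nat.Div0.mod_add, Nat.mod_small; lia).
  rewrite (lsum_ext _ _ (fun x => h (S x))); [simpl; lra|].
  intros x Hx. apply in_seq in Hx. rewrite Nat.mod_small by lia. f_equal; lia. Qed.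

Lemma index_of_spec i l : In i l ->
  (index_of i l < length l)%nat /\ nth (index_of i l) l 0%nat = i.
Proof. induction l as [|a l IH]; intros H; [destruct H|]. simpl. destruct (Nat.eqb_spec i a).
  - subst; split; [lia|reflexivity].
  - destruct H as [H|H]; [congruence|]. destruct (IH H); split; [lia|auto]. Qed.

Lemma index_of_nth l p : NoDup l -> (p < length l)%nat -> index_of (nth p l 0%nat) l = p.
Proof. revert p; induction l as [|a l IH]; intros p Hn Hp; simpl in Hp; [lia|].
  inversion Hn; subst. destruct p; simpl.
  - rewrite Nat.eqb_refl; reflexivity.
  - destruct (Nat.eqb_spec (nth p l 0%nat) a) as [E|E].
    + exfalso. apply H1. rewrite <- E. apply nth_In. lia.
    + rewrite IH; auto. lia. Qed.

Lemma cyc_nth l p s : NoDup l -> (p < length l)%nat ->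
  cyc l (nth p l 0%nat) s = nth ((p + s) mod length l) l 0%nat.
Proof. intros. unfold cyc. rewrite index_of_nth; auto. Qed.

Lemma cyc_in l i s : In i l -> In (cyc l i s) l.
Proof. intros H. unfold cyc. apply nth_In, Nat.mod_upper_bound. destruct l; [destruct H|discriminate]. Qed.

Lemma cyc_succ_succ l i : NoDup l -> In i l -> cyc l (cyc l i 1) 1 = cyc l i 2.
Proof. intros Hn Hi. destruct (index_of_spec i l Hi) as [Hlt _].
  assert (length l <> 0%nat) by lia.
  unfold cyc at 2. rewrite cyc_nth by (auto; apply Nat.mod_upper_bound; auto). unfold cyc.
  rewrite Nat.Div0.add_mod_idemp_l, <- Nat.add_assoc. reflexivity. Qed.

Lemma cyc_neq l i s : NoDup l -> In i l -> (3 <= length l)%nat -> (1 <= s <= 2)%nat ->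
  cyc l i s <> i.
Proof. intros Hn Hi Hl Hs E. destruct (index_of_spec i l Hi) as [Hlt Heq].
  unfold cyc in E. rewrite <- Heq in E at 2.
  set (p := index_of i l) in *. set (n := length l) in *.
  assert (Hm : ((p + s) mod n < n)%nat) by (apply Nat.mod_upper_bound; lia).
  pose proof (proj1 (NoDup_nth l 0%nat) Hn _ _ Hm Hlt E) as E2.
  destruct (Nat.lt_ge_cases (p + s) n).
  - rewrite Nat.mod_small in E2 by lia. lia.
  - replace (p + s)%nat with (p + s - n + 1 * n)%nat in E2 by lia.
    rewrite Nat.Div0.mod_add, Nat.mod_small in E2 by lia. lia. Qed.

Lemma lsum_cyclic_telescope l F : NoDup l -> (1 <= length l)%nat ->
  lsum l (fun i => F i - F (cyc l i 1)) = 0.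
Proof. intros Hn Hl. rewrite lsum_positions.
  rewrite (lsum_ext _ _ (fun p => F (nth p l 0%nat) - F (nth ((p + 1) mod length l) l 0%nat))).
  - rewrite lsum_minus, (lsum_rotate _ (fun q => F (nth q l 0%nat))) by auto. lra.
  - intros p Hp. apply in_seq in Hp. rewrite cyc_nth by (auto; lia). reflexivity. Qed.

Lemma ERsum_finite l (f : nat -> ER) g : (forall i, In i l -> f i = Some (g i)) ->
  fold_right ERplus (Some 0) (map f l) = Some (lsum l g).
Proof. induction l as [|a l IH]; intros H; [reflexivity|]. simpl.
  rewrite IH, H; simpl; auto. intros; apply H; simpl; auto. Qed.

Lemma ERsum_infinite l (f : nat -> ER) i : In i l -> f i = None ->
  fold_right ERplus (Some 0) (map f l) = None.
Proof. induction l as [|a l IH]; intros Hi Hf; [destruct Hi|]. simpl. destruct Hi as [->|Hi].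
  - rewrite Hf. reflexivity.
  - rewrite (IH Hi Hf). destruct (f a); reflexivity. Qed.

Lemma PC_obj_feasible N A u (a t : nat -> R) : (forall i, (i < N)%nat -> A i (a i)) ->
  PC_obj N A u a t = Some (lsum (seq 0 N) (fun i => - t i + u i a)).
Proof. intros Ha. apply ERsum_finite. intros i Hi. apply in_seq in Hi. unfold uA.
  destruct (excluded_middle_informative (A i (a i))) as [_|h]; [reflexivity|].
  exfalso; apply h, Ha; lia. Qed.

Lemma PC_obj_infeasible N A u (a t : nat -> R) i : (i < N)%nat -> ~ A i (a i) ->
  PC_obj N A u a t = None.
Proof. intros Hi Ha. apply (ERsum_infinite _ _ i); [apply in_seq; lia|]. unfold uA.
  destruct (excluded_middle_informative (A i (a i))); [contradiction|reflexivity]. Qed.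

Section Mechanism.

Variables (N : nat) (Rb : nat -> nat -> bool) (ordr : nat -> list nat).
Hypothesis HC3 : forall j, (j < N)%nat -> (3 <= Ccard N Rb j)%nat.
Hypothesis Hord_nodup : forall j, (j < N)%nat -> NoDup (ordr j).
Hypothesis Hord_enum : forall j, (j < N)%nat ->
  forall k, In k (ordr j) <-> ((k < N)%nat /\ Rb k j = true).
Hypothesis HRself : forall i, (i < N)%nat -> Rb i i = true.

Lemma ordr_perm j : (j < N)%nat -> Permutation (filter (Cmem Rb j) (seq 0 N)) (ordr j).
Proof. intros Hj. apply NoDup_Permutation; [apply NoDup_filter, seq_NoDup|auto|].
  intros x. rewrite filter_In, in_seq, Hord_enum by auto. unfold Cmem.
  split; intros [? ?]; split; auto; lia. Qed.

Lemma ordr_length j : (j < N)%nat -> (3 <= length (ordr j))%nat.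
Proof. intros Hj. rewrite <- (Permutation_length (ordr_perm j Hj)). apply HC3, Hj. Qed.

Lemma affected_in_ordr i j : (i < N)%nat -> In j (filter (Rb i) (seq 0 N)) ->
  (j < N)%nat /\ In i (ordr j).
Proof. intros Hi Hj. apply filter_In in Hj as [Hj Hr]. apply in_seq in Hj.
  split; [lia|]. apply Hord_enum; [lia|auto]. Qed.

(* Summing, over all users i and all j ∈ R_i, a quantity of the form F_j(i) - F_j(i^+)
   gives zero: regroup by j and telescope around the cycle C_j. *)
Lemma users_telescope (G F : nat -> nat -> R) :
  (forall j, (j < N)%nat -> forall i, In i (ordr j) -> G i j = F j i - F j (cyc (ordr j) i 1)) ->
  lsum (seq 0 N) (fun i => lsum (filter (Rb i) (seq 0 N)) (G i)) = 0.
Proof. intros HG.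
  rewrite (lsum_ext _ _ (fun i => lsum (seq 0 N) (fun j => if Rb i j then G i j else 0)))
    by (intros; apply lsum_filter).
  rewrite lsum_swap. transitivity (lsum (seq 0 N) (fun _ => 0)); [|apply lsum_zero].
  apply lsum_ext. intros j Hj. apply in_seq in Hj.
  change (lsum (seq 0 N) (fun i => if Cmem Rb j i then G i j else 0) = 0).
  rewrite <- lsum_filter, (lsum_perm _ _ _ (ordr_perm j ltac:(lia))).
  rewrite (lsum_ext _ _ (fun i => F j i - F j (cyc (ordr j) i 1))) by (intros; apply HG; auto; lia).
  apply lsum_cyclic_telescope; [apply Hord_nodup; lia|]. pose proof (ordr_length j ltac:(lia)). lia.
Qed.

Definition lprice (mp : nat -> nat -> R) (i j : nat) : R :=
  mp (cyc (ordr j) i 1) j - mp (cyc (ordr j) i 2) j.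
Definition quad (ma mp : nat -> nat -> R) (j k : nat) : R :=
  mp k j * (ma k j - ma (cyc (ordr j) k 1) j) ^ 2.

Lemma quad_nonneg ma mp j k : msg_ok Rb k (mp k) -> Rb k j = true -> 0 <= quad ma mp j k.
Proof. intros Hok Hr. apply Rmult_le_pos; [apply Hok, Hr|apply pow2_ge_0]. Qed.

Lemma that_decomp ma mp i : (i < N)%nat ->
  that N Rb ordr ma mp i = lsum (filter (Rb i) (seq 0 N)) (fun j =>
    lprice mp i j * ahat N Rb ma j + quad ma mp j i - quad ma mp j (cyc (ordr j) i 1)).
Proof. intros Hi. apply lsum_ext. intros j Hj.
  destruct (affected_in_ordr i j Hi Hj) as [Hj' Hin].
  unfold quad, lprice. rewrite cyc_succ_succ by auto. reflexivity. Qed.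

Lemma lprice_balance mp (x : nat -> R) :
  lsum (seq 0 N) (fun i => lsum (filter (Rb i) (seq 0 N)) (fun j => lprice mp i j * x j)) = 0.
Proof. apply (users_telescope _ (fun j i => mp (cyc (ordr j) i 1) j * x j)).
  intros j Hj i Hi. unfold lprice. rewrite cyc_succ_succ by auto. ring. Qed.

Lemma tax_balance ma mp : sumN N (that N Rb ordr ma mp) = 0.
Proof. rewrite sumN_lsum.
  apply (users_telescope _ (fun j i => mp (cyc (ordr j) i 1) j * ahat N Rb ma j + quad ma mp j i)).
  intros j Hj i Hi. unfold quad. rewrite cyc_succ_succ by auto. ring. Qed.

(* User i can unilaterally move every action â_j, j ∈ R_i, to any target b_j:
   it suffices to announce the following proposal for j. *)
Definition target_row (ma : nat -> nat -> R) (i : nat) (b : nat -> R) (j : nat) : R :=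
  INR (Ccard N Rb j) * b j - (sumN_if N (Cmem Rb j) (fun k => ma k j) - ma i j).

Lemma ahat_target ma i b j : (i < N)%nat -> (j < N)%nat -> Rb i j = true ->
  ahat N Rb (dev ma i (target_row ma i b)) j = b j.
Proof. intros Hi Hj Hr. unfold ahat. rewrite sumN_if_lsum.
  rewrite (lsum_ext _ _ (fun k => if Nat.eqb k i then target_row ma i b j else ma k j))
    by (intros k _; unfold dev; destruct (Nat.eqb k i); reflexivity).
  rewrite lsum_update; [|apply NoDup_filter, seq_NoDup|].
  - unfold target_row. rewrite sumN_if_lsum. field. apply not_0_INR. pose proof (HC3 j Hj). lia.
  - apply filter_In. split; [apply in_seq; lia|exact Hr]. Qed.

Lemma that_target ma mp i b : (i < N)%nat ->
  that N Rb ordr (dev ma i (target_row ma i b)) (dev mp i (fun _ => 0)) i =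
  lsum (filter (Rb i) (seq 0 N)) (fun j => lprice mp i j * b j - quad ma mp j (cyc (ordr j) i 1)).
Proof. intros Hi. apply lsum_ext. intros j Hj.
  destruct (affected_in_ordr i j Hi Hj) as [Hj' Hin].
  assert (Hr : Rb i j = true) by (apply filter_In in Hj; tauto).
  assert (n1 : cyc (ordr j) i 1 <> i) by (apply cyc_neq; auto using ordr_length; lia).
  assert (n2 : cyc (ordr j) i 2 <> i) by (apply cyc_neq; auto using ordr_length; lia).
  unfold lprice, quad. rewrite cyc_succ_succ, ahat_target by auto. cbv zeta. unfold dev.
  rewrite Nat.eqb_refl, (proj2 (Nat.eqb_neq _ _) n1), (proj2 (Nat.eqb_neq _ _) n2). ring. Qed.

Section Equilibrium.

Variables (A : nat -> R -> Prop) (u : nat -> (nat -> R) -> R) (ma mp : nat -> nat -> R).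
Hypothesis Hu_local : forall i, (i < N)%nat -> forall a b : nat -> R,
  (forall k, (k < N)%nat -> Rb i k = true -> a k = b k) -> u i a = u i b.
Hypothesis HNE : is_NE N Rb ordr A u ma mp.

(* Deviating to the target proposal for any feasible b shows that the equilibrium
   outcome is feasible for i and bounds what i could gain by moving the actions to b. *)
Lemma ne_deviation_bound i b : (i < N)%nat -> A i (b i) ->
  A i (ahat N Rb ma i) /\
  - lsum (filter (Rb i) (seq 0 N)) (fun j => lprice mp i j * b j - quad ma mp j (cyc (ordr j) i 1))
    + u i b <= - that N Rb ordr ma mp i + u i (ahat N Rb ma).
Proof. intros Hi Hb. destruct HNE as [_ Hdev].
  specialize (Hdev i Hi (target_row ma i b) (fun _ => 0) (fun _ _ => Rle_refl 0)).
  rewrite that_target in Hdev by auto.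
  assert (Hub : u i (ahat N Rb (dev ma i (target_row ma i b))) = u i b)
    by (apply Hu_local; auto using ahat_target).
  assert (HAb : A i (ahat N Rb (dev ma i (target_row ma i b)) i))
    by (rewrite ahat_target; auto).
  unfold uA in Hdev. rewrite Hub in Hdev.
  destruct (excluded_middle_informative _) as [_|]; [|contradiction].
  destruct (excluded_middle_informative _) as [Ha|]; [|contradiction].
  split; auto. Qed.

Lemma ne_price_taking i b : (i < N)%nat -> A i (b i) ->
  u i b - lsum (filter (Rb i) (seq 0 N)) (fun j => lprice mp i j * b j)
  <= u i (ahat N Rb ma) - lsum (filter (Rb i) (seq 0 N)) (fun j => lprice mp i j * ahat N Rb ma j).
Proof. intros Hi Hb. destruct (ne_deviation_bound i b Hi Hb) as [_ Hbound].
  rewrite that_decomp, !lsum_minus, lsum_plus in Hbound by auto.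
  assert (0 <= lsum (filter (Rb i) (seq 0 N)) (fun j => quad ma mp j i)).
  { apply lsum_nonneg. intros j Hj. apply filter_In in Hj as [_ Hr].
    apply quad_nonneg; [apply (proj1 HNE), Hi|exact Hr]. }
  lra. Qed.

(* (a) Individual rationality: the zero action with zero tax is always available. *)
Lemma ne_individually_rational i : (i < N)%nat -> A i 0 ->
  ERle (uA A u i (fun _ => 0) 0) (uA A u i (ahat N Rb ma) (that N Rb ordr ma mp i)).
Proof. intros Hi HA0. destruct (ne_deviation_bound i (fun _ => 0) Hi HA0) as [Ha Hbound].
  assert (0 <= lsum (filter (Rb i) (seq 0 N)) (fun j => quad ma mp j (cyc (ordr j) i 1))).
  { apply lsum_nonneg. intros j Hj. destruct (affected_in_ordr i j Hi Hj) as [Hj' Hin].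
    destruct (proj1 (Hord_enum j Hj' _) (cyc_in _ _ 1 Hin)) as [Hk Hr].
    apply quad_nonneg; [apply (proj1 HNE), Hk|exact Hr]. }
  rewrite (lsum_ext _ _ (fun j => - quad ma mp j (cyc (ordr j) i 1))), lsum_opp in Hbound
    by (intros; ring).
  unfold uA. destruct (excluded_middle_informative (A i 0)) as [_|]; [|exact I].
  destruct (excluded_middle_informative _); [simpl; lra|contradiction]. Qed.

(* (b) Efficiency: summing the price-taking inequalities, prices and taxes cancel,
   so no feasible balanced allocation has larger total utility. *)
Lemma ne_welfare_max (a' t' : nat -> R) : (forall i, (i < N)%nat -> A i (a' i)) ->
  sumN N t' = 0 ->
  lsum (seq 0 N) (fun i => - t' i + u i a')
  <= lsum (seq 0 N) (fun i => - that N Rb ordr ma mp i + u i (ahat N Rb ma)).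
Proof. intros Ha' Ht'.
  assert (Hsum := lsum_le (seq 0 N) _ _ (fun i Hi =>
    let Hi' := proj2 (proj1 (in_seq _ _ _) Hi) in ne_price_taking i a' Hi' (Ha' i Hi'))).
  rewrite !lsum_minus, !lprice_balance in Hsum.
  pose proof (tax_balance ma mp) as Htax. rewrite sumN_lsum in Ht', Htax.
  rewrite !lsum_plus, !lsum_opp. lra. Qed.

End Equilibrium.

End Mechanism.

Theorem theorem1
  (N : nat) (Rb : nat -> nat -> bool) (ordr : nat -> list nat)
  (A : nat -> R -> Prop) (u : nat -> (nat -> R) -> R)
  (ma mp : nat -> nat -> R)
  (HN : (1 <= N)%nat)
  (HRself : forall i, (i < N)%nat -> Rb i i = true)
  (HC3 : forall j, (j < N)%nat -> (3 <= Ccard N Rb j)%nat)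
  (Hord_nodup : forall j, (j < N)%nat -> NoDup (ordr j))
  (Hord_enum : forall j, (j < N)%nat ->
     forall k, In k (ordr j) <-> ((k < N)%nat /\ Rb k j = true))
  (HAne : forall i, (i < N)%nat -> exists x, A i x)
  (HAconv : forall i, (i < N)%nat -> convex_set (A i))
  (HAcomp : forall i, (i < N)%nat -> compact (A i))
  (HA0 : forall i, (i < N)%nat -> A i 0)
  (Hu_local : forall i, (i < N)%nat -> forall a b : nat -> R,
     (forall k, (k < N)%nat -> Rb i k = true -> a k = b k) -> u i a = u i b)
  (Hu_concave : forall i, (i < N)%nat -> forall (a b : nat -> R) (l : R),
     A i (a i) -> A i (b i) -> 0 <= l <= 1 ->
     l * u i a + (1 - l) * u i b <= u i (fun k => l * a k + (1 - l) * b k))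
  (HNE : is_NE N Rb ordr A u ma mp) :
  (forall i, (i < N)%nat ->
     ERle (uA A u i (fun _ => 0) 0)
          (uA A u i (ahat N Rb ma) (that N Rb ordr ma mp i)))
  /\ PC_optimal N A u (ahat N Rb ma) (that N Rb ordr ma mp).
Proof.
  pose proof (ne_deviation_bound N Rb ordr HC3 Hord_nodup Hord_enum HRself
                A u ma mp Hu_local HNE) as Hdev.
  assert (Hfeas : forall i, (i < N)%nat -> A i (ahat N Rb ma i))
    by (intros i Hi; exact (proj1 (Hdev i (fun _ => 0) Hi (HA0 i Hi)))).
  split; [|split; [split|]].
  - intros i Hi. exact (ne_individually_rational N Rb ordr HC3 Hord_nodup Hord_enum HRself
                          A u ma mp Hu_local HNE i Hi (HA0 i Hi)).
  - exact Hfeas.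
  - exact (tax_balance N Rb ordr HC3 Hord_nodup Hord_enum ma mp).
  - intros a' t' Ht'.
    destruct (classic (forall i, (i < N)%nat -> A i (a' i))) as [Ha'|Hinf].
    + rewrite !PC_obj_feasible by auto.
      exact (ne_welfare_max N Rb ordr HC3 Hord_nodup Hord_enum HRself
               A u ma mp Hu_local HNE a' t' Ha' Ht').
    + apply not_all_ex_not in Hinf as [i Hi].
      apply imply_to_and in Hi as [Hi Ha'].
      rewrite (PC_obj_infeasible _ _ _ _ _ i) by auto. exact I.
Qed.
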